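(* There is an absolute constant $c>0$ such that for all positive integers $f,l$ there exist integers $(M_C)_C$ such that the hypercube Hamiltonian $H=\sum_C\bigl(\sum_{i\in C}S_i-M_C\bigr)^2$ on $N=l^f$ variables has at least $2^N\bigl(\frac{c}{f\sqrt l}\bigr)^{n_C}$ global minima, all of which are $(2^f-1)$-minima.
   Context: Fix positive integers $f,l$ and let $N=l^f$. The variables $S_i\in\{-1,+1\}$ are indexed by vectors $i=(x_1,\dots,x_f)$ with $x_a\in\{1,\dots,l\}$. A column $C$ is specified by an index $b\in\{1,\dots,f\}$ and integers $y_a\in\{1,\dots,l\}$ for all $a\neq b$; a variable $(x_1,\dots,x_f)$ lies in $C$ iff $x_a=y_a$ for all $a\neq b$. The number of columns is $n_C=f\,l^{f-1}$. Given an integer $M_C$ for each column, $H(S)=\sum_C\bigl(\sum_{i\in C}S_i-M_C\bigr)^2$. A global minimum is an assignment minimizing $H$. For an integer $k\geq1$, an assignment $A$ is a $k$-minimum of $H$ if every assignment differing from $A$ in at least one and at most $k$ variables has a strictly larger value of $H$ than $A$. *)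

From HB Require Import structures.
From mathcomp Require Import all_boot all_order all_algebra.
Set Implicit Arguments. Unset Strict Implicit. Unset Printing Implicit Defensive.
Import GRing.Theory Num.Theory.
Local Open Scope ring_scope.

(* A variable index i = (x_1,...,x_f), x_a in {1..l} (encoded as 'I_l). *)
Definition Var (f l : nat) := {ffun 'I_f -> 'I_l}.

(* An assignment S : Var -> {-1,+1}; true encodes +1, false encodes -1. *)
Definition Assign (f l : nat) := {ffun Var f l -> bool}.

Definition spin (b : bool) : int := if b then 1 else -1.

(* A column: a direction b and coordinates y_a for all a <> b. *)
Definition Col (f l : nat) :=
  {b : 'I_f & {ffun {a : 'I_f | a != b} -> 'I_l}}.

Definition inCol (f l : nat) (C : Col f l) (i : Var f l) : bool :=
  [forall a : {a : 'I_f | a != tag C}, i (val a) == tagged C a].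

Definition Ham (f l : nat) (M : Col f l -> int) (S : Assign f l) : int :=
  \sum_(C : Col f l) (\sum_(i : Var f l | inCol C i) spin (S i) - M C) ^+ 2.

Definition hdist (f l : nat) (S T : Assign f l) : nat :=
  #|[set i : Var f l | S i != T i]|.

Definition globalMin (f l : nat) (M : Col f l -> int) (S : Assign f l) : bool :=
  [forall T : Assign f l, Ham M S <= Ham M T].

Definition kMin (f l : nat) (k : nat) (M : Col f l -> int) (S : Assign f l) : bool :=
  [forall T : Assign f l,
     ((1 <= hdist S T)%N && (hdist S T <= k)%N) ==> (Ham M S < Ham M T)].

(* Take for M the column sums of the profile realised by the largest number of
   assignments.  Those assignments have H = 0, so the global minima are exactly
   the assignments with these column sums.  Two distinct assignments with equal
   column sums differ on a set meeting no line in exactly one point, and such a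
   nonempty set has at least 2^f points (split it along one direction and
   induct), so every global minimum is a (2^f - 1)-minimum.
   For the count, weight a profile m by exp(-sum_C |m_C| / sqrt l).  Each column
   sum has mean square at most l, so by Jensen and Cauchy-Schwarz the
   assignments carry total weight at least 2^N e^(-n_C), while all profiles
   together weigh at most (2 (sqrt l + 1))^n_C; hence the largest fiber has at
   least 2^N (e^(-1) / (2 (sqrt l + 1)))^n_C elements. *)

From HB Require Import structures.
From mathcomp Require Import all_boot all_order all_algebra.
From Stdlib Require Import Reals.
From mathcomp Require Import Rstruct zify ring lra.

Set Implicit Arguments. Unset Strict Implicit. Unset Printing Implicit Defensive.
Import Order.TTheory GRing.Theory Num.Theory.

Section Lines.
Variables I T : finType.

Definition agree_off (b : I) (i j : {ffun I -> T}) : bool :=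
  [forall a, (a != b) ==> (i a == j a)].

Definition line_closed (A : {set I}) (D : {set {ffun I -> T}}) :=
  forall i, i \in D -> forall b, b \in A ->
    exists2 j, j \in D & (j != i) && agree_off b j i.

Lemma agree_off_neq b (i j : {ffun I -> T}) :
  j != i -> agree_off b j i -> j b != i b.
Proof.
move=> ji agji; apply: contra ji => /eqP jib; apply/eqP/ffunP => a.
have [->//|ab] := eqVneq a b.
by move/forallP/(_ a): agji; rewrite ab => /eqP.
Qed.

Lemma line_closed_slice A D b v :
  line_closed A D -> line_closed (A :\ b) [set x in D | x b == v].
Proof.
move=> closedD x; rewrite inE => /andP [xD /eqP xv] b'.
rewrite in_setD1 => /andP [b'b b'A].
have [y yD /andP [yx agyx]] := closedD x xD b' b'A.
exists y; last by rewrite yx.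
by rewrite inE yD -xv; move/forallP/(_ b): agyx; rewrite eq_sym b'b.
Qed.

Lemma line_closed_card_ge A D :
  D != set0 -> line_closed A D -> (expn 2 #|A| <= #|D|)%nat.
Proof.
move eA : #|A| => n; elim: n A D eA => [|n IHn] A D eA D0 closedD.
  by rewrite expn0 card_gt0.
have [b bA] : exists b, b \in A by apply/set0Pn; rewrite -card_gt0 eA.
have [i iD] := set0Pn _ D0.
have [j jD /andP [ji agji]] := closedD i iD b bA.
have eA' : #|A :\ b| = n by move: eA; rewrite (cardsD1 b) bA add1n => -[].
have sliceP k : k \in D -> (expn 2 n <= #|[set x in D | x b == k b]|)%nat.
  move=> kD; apply: (IHn (A :\ b)) => //; last exact: line_closed_slice.
  by apply/set0Pn; exists k; rewrite inE kD eqxx.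
rewrite expnS mul2n -addnn -(cardsID [set x : {ffun I -> T} | x b == i b] D).
apply: leq_add.
  apply: leq_trans (sliceP _ iD) (subset_leq_card _).
  by apply/subsetP => x; rewrite !inE andbC.
apply: leq_trans (sliceP _ jD) (subset_leq_card _).
apply/subsetP => x; rewrite !inE => /andP [-> /eqP ->].
by rewrite /= agree_off_neq.
Qed.

End Lines.

Section Spins.
Local Open Scope ring_scope.
Variable V : finType.

Lemma spin_norm b : `|spin b| = 1.
Proof. by case: b. Qed.

Lemma subr_spin_neq0 x y : x != y -> spin x - spin y != 0.
Proof. by case: x; case: y. Qed.

Definition flip (i : V) (S : {ffun V -> bool}) : {ffun V -> bool} :=
  [ffun k => if k == i then ~~ S k else S k].

Lemma flipK i : involutive (flip i).
Proof. by move=> S; apply/ffunP => k; rewrite !ffunE; case: eqP => // _; rewrite negbK. Qed.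

(* Flipping [S i] permutes the assignments and negates every term. *)
Lemma sum_spinM_eq0 i j : i != j ->
  \sum_(S : {ffun V -> bool}) spin (S i) * spin (S j) = 0.
Proof.
move=> ij; set X := \sum_(S : {ffun V -> bool}) _.
suff : X = - X by lia.
rewrite {1}/X (reindex_inj (inv_inj (flipK i))) -sumrN.
apply: eq_bigr => S _; rewrite !ffunE eqxx eq_sym (negbTE ij).
by case: (S i); rewrite /= ?mulN1r ?mul1r ?opprK.
Qed.

Lemma sum_sqr_spin_sum (P : pred V) :
  \sum_(S : {ffun V -> bool}) (\sum_(i | P i) spin (S i)) ^+ 2
    = (#|{: {ffun V -> bool}}| * #|P|)%:R.
Proof.
under eq_bigr do rewrite expr2 big_distrlr /=.
rewrite exchange_big /=; under eq_bigr do rewrite exchange_big /=.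
rewrite natrM mulr_natr -sumr_const; apply: eq_bigr => i Pi.
rewrite (bigD1 i) //= [X in _ + X]big1 ?addr0.
  by rewrite -sumr_const; apply: eq_bigr => S _; case: (S i).
by move=> j /andP [_ ji]; rewrite sum_spinM_eq0 // eq_sym.
Qed.

End Spins.

Section Columns.
Local Open Scope ring_scope.
Variables f l : nat.

Definition colsum (S : Assign f l) (C : Col f l) : int :=
  \sum_(i | inCol C i) spin (S i).

Lemma Ham_ge0 (M : Col f l -> int) S : 0 <= Ham M S.
Proof. by apply: sumr_ge0 => C _; apply: sqr_ge0. Qed.

Lemma Ham_eq0E (M : Col f l -> int) S : Ham M S = 0 <-> forall C, colsum S C = M C.
Proof.
split=> [/eqP|eqM]; last by apply: big1 => C _; rewrite -/(colsum S C) eqM subrr expr0n.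
rewrite psumr_eq0 => [/allP eq0 C|C _]; last exact: sqr_ge0.
by move: (eq0 C (mem_index_enum C)); rewrite sqrf_eq0 subr_eq0 => /eqP.
Qed.

Definition line_col (b : 'I_f) (i : Var f l) : Col f l :=
  existT _ b [ffun a : {a : 'I_f | a != b} => i (val a)].

Lemma inCol_line_col b (i k : Var f l) : inCol (line_col b i) k = agree_off b k i.
Proof.
apply/forallP/forallP => /= agki a.
  by apply/implyP => ab; move: (agki (exist _ a ab)); rewrite ffunE.
by rewrite ffunE; move: (agki (val a)); rewrite (valP a).
Qed.

(* If [S] and [T] have the same column sums, then on every line their
   difference [spin S - spin T] sums to zero, so the set where they differ
   never meets a line in exactly one point. *)
Lemma colsum_eq_hdist_ge (S T : Assign f l) :
  (forall C, colsum S C = colsum T C) -> S != T -> (expn 2 f <= hdist S T)%nat.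
Proof.
move=> eqST neqST; rewrite /hdist -[X in expn 2 X](card_ord f) -cardsT.
apply: line_closed_card_ge.
  apply/set0Pn; case: (pickP (fun i => S i != T i)) => [i Sneq|eqST'].
    by exists i; rewrite inE.
  by case/eqP: neqST; apply/ffunP => i; apply/eqP/negbFE/eqST'.
move=> i; rewrite inE => Sneq b _.
case: (pickP (fun j => [&& S j != T j, j != i & agree_off b j i])) => [j|noj].
  by case/and3P=> Sj ji agj; exists j; rewrite ?inE ?ji.
exfalso; move/eqP: (eqST (line_col b i)); apply/negP; rewrite /colsum -subr_eq0 -sumrB.
rewrite (bigD1 i) /=; last by rewrite inCol_line_col; apply/forallP => a; apply/implyP.
rewrite big1 ?addr0 ?subr_spin_neq0 // => k /andP [kC ki].
move: (noj k); rewrite ki -inCol_line_col kC !andbT => /negbFE/eqP ->.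
exact: subrr.
Qed.

Lemma card_inCol_le (C : Col f l) : (#|[pred i | inCol C i]| <= l)%nat.
Proof.
rewrite -[X in (_ <= X)%nat](card_ord l).
apply: (@leq_card_in _ _ (fun i : Var f l => i (tag C))) => i j.
rewrite !inE => iC jC eqij; apply/ffunP => a.
have [->//|ab] := eqVneq a (tag C).
by move/forallP/(_ (exist _ a ab)): iC => /eqP ->; move/forallP/(_ (exist _ a ab)): jC => /eqP ->.
Qed.

Lemma abs_colsum_le S C : (`|colsum S C| <= l)%nat.
Proof.
rewrite -lez_nat abszE; apply: le_trans (ler_norm_sum _ _ _) _.
under eq_bigr do rewrite spin_norm.
by rewrite sumr_const natz lez_nat card_inCol_le.
Qed.

Lemma sum_sqr_colsum C :
  \sum_(S : Assign f l) colsum S C ^+ 2 = (#|{: Assign f l}| * #|[pred i | inCol C i]|)%:R.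
Proof. exact: sum_sqr_spin_sum. Qed.

Lemma card_Assign : #|{: Assign f l}| = expn 2 (expn l f).
Proof. by rewrite card_ffun card_bool card_ffun !card_ord. Qed.

Lemma card_Col : #|{: Col f l}| = (f * expn l (f - 1))%nat.
Proof.
rewrite card_tagged sumnE big_map big_enum /=.
rewrite (eq_bigr (fun _ => expn l (f - 1))) => [|b _]; last first.
  by rewrite card_ffun card_ord card_sig (cardC1 b) card_ord subn1.
by rewrite sum_nat_const card_ord.
Qed.

End Columns.

Section ExpFacts.
Local Open Scope ring_scope.

Lemma exp_gt0 (x : R) : 0 < exp x.
Proof. exact/RltP/exp_pos. Qed.

Lemma ler_exp (x y : R) : x <= y -> exp x <= exp y.
Proof.
rewrite le_eqVlt => /orP [/eqP -> //| /RltP lt_xy].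
exact/ltW/RltP/exp_increasing.
Qed.

Lemma exp_ge1Dx (x : R) : 1 + x <= exp x.
Proof. exact/RleP/exp_ineq1_le. Qed.

(* Use the tangent line of [exp] at the mean. *)
Lemma jensen_exp (I : finType) (y : I -> R) : (0 < #|I|)%nat ->
  #|I|%:R * exp ((\sum_i y i) / #|I|%:R) <= \sum_i exp (y i).
Proof.
move=> I0; set mu := (\sum_i y i) / #|I|%:R.
have tangent i : exp mu * (1 + (y i - mu)) <= exp (y i).
  apply: le_trans (ler_wpM2l (ltW (exp_gt0 mu)) (exp_ge1Dx _)) _.
  by rewrite expRD RplusE addrC subrK.
apply: le_trans (ler_sum _ (fun i _ => tangent i)).
rewrite -mulr_sumr big_split /= sumrB !sumr_const.
have -> : mu *+ #|I| = \sum_i y i by rewrite -mulr_natr divfK // pnatr_eq0 -lt0n.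
by rewrite subrr addr0 mulrC.
Qed.

Lemma sum_le_of_sum_sqr_le (I : finType) (a : I -> R) (s : R) : 0 < s ->
  \sum_i a i ^+ 2 <= #|I|%:R * s ^+ 2 -> \sum_i a i <= #|I|%:R * s.
Proof.
move=> s0 sum_sqr_le.
have amgm i : 2 * s * a i <= a i ^+ 2 + s ^+ 2.
  rewrite -subr_ge0 (_ : _ - _ = (a i - s) ^+ 2); [exact: sqr_ge0 | ring].
have : \sum_i 2 * s * a i <= \sum_i (a i ^+ 2 + s ^+ 2) by apply: ler_sum.
rewrite -mulr_sumr big_split /= sumr_const -mulr_natl => le2.
have : 2 * s * \sum_i a i <= 2 * s * (#|I|%:R * s) by lra.
by rewrite ler_pM2l // mulr_gt0.
Qed.

Lemma sum_exp_geom_le (s : R) n : 0 < s -> \sum_(t < n) exp (- s^-1) ^+ t <= s + 1.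
Proof.
move=> s0; set q := exp (- s^-1).
have q0 : 0 < q := exp_gt0 _.
have qs : q * (1 + s^-1) <= 1.
  apply: le_trans (ler_wpM2l (ltW q0) (exp_ge1Dx _)) _.
  by rewrite /q expRD RplusE addNr expR0.
have q1 : q < 1.
  by apply: lt_le_trans qs; rewrite -[X in X < _]mulr1 ltr_pM2l // ltrDl invr_gt0.
have geom : (1 - q) * \sum_(t < n) q ^+ t <= 1.
  rewrite -opprB mulNr -subrX1 opprB lerBlDr lerDl.
  exact/exprn_ge0/ltW.
have qs' : q * (s + 1) <= s.
  have -> : q * (s + 1) = q * (1 + s^-1) * s by field; rewrite gt_eqF.
  by rewrite -[X in _ <= X]mul1r ler_wpM2r // ltW.
have lb : 1 <= (1 - q) * (s + 1) by lra.
have q1' : 0 < 1 - q by rewrite subr_gt0.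
by rewrite -(ler_pM2l q1'); apply: le_trans geom lb.
Qed.

End ExpFacts.

Section WeightedPigeonhole.
Local Open Scope ring_scope.
Variables (A B : finType) (g : A -> B).

Local Notation fiber b := [set a | g a == b].

Lemma exists_max_fiber (a0 : A) :
  exists2 b, (forall b', #|fiber b'| <= #|fiber b|)%nat & fiber b != set0.
Proof.
pose b := [arg max_(b > g a0) #|fiber b|].
have b_max b' : (#|fiber b'| <= #|fiber b|)%nat.
  by rewrite /b; case: arg_maxnP => // ? _; apply.
exists b => //; rewrite -card_gt0 (leq_trans _ (b_max (g a0))) // card_gt0.
by apply/set0Pn; exists a0; rewrite inE.
Qed.

Lemma sum_weight_le_max_fiber (w : B -> R) b0 :
  (forall b, 0 <= w b) -> (forall b, #|fiber b| <= #|fiber b0|)%nat ->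
  \sum_a w (g a) <= #|fiber b0|%:R * \sum_b w b.
Proof.
move=> w_ge0 b0_max; rewrite (partition_big g predT) //= mulr_sumr.
apply: ler_sum => b _; rewrite (eq_bigr (fun _ => w b)) => [|a /eqP -> //].
rewrite sumr_const -[w b *+ _]mulr_natl (_ : #|_| = #|fiber b|).
  by apply: ler_wpM2r; rewrite ?ler_nat.
by apply: eq_card => a; rewrite inE.
Qed.

End WeightedPigeonhole.

Section Profiles.
Local Open Scope ring_scope.
Variables f l : nat.
Hypothesis l_gt0 : (0 < l)%nat.

Local Notation profile := {ffun Col f l -> bool * 'I_l.+1}.
Local Notation sqrtl := (Num.sqrt (l%:R : R)).

(* A zero column sum has two codes; this only weakens [sum_weight_le]. *)
Definition profile_of (S : Assign f l) : profile :=
  [ffun C => (0 <= colsum S C, inord (absz (colsum S C)))].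

Definition profile_val (d : profile) (C : Col f l) : int :=
  if (d C).1 then ((d C).2 : nat)%:Z else - ((d C).2 : nat)%:Z.

Lemma profile_of_abs S C : ((profile_of S C).2 : nat) = absz (colsum S C).
Proof. by rewrite ffunE /= inordK // ltnS abs_colsum_le. Qed.

Lemma profile_val_of S C : profile_val (profile_of S) C = colsum S C.
Proof.
rewrite /profile_val profile_of_abs ffunE /= abszE.
by case: (lerP 0 (colsum S C)) => [/ger0_norm|/ltr0_norm] ->; rewrite ?opprK.
Qed.

Definition weight (d : profile) : R := \prod_C exp (- sqrtl^-1) ^+ (d C).2.

Lemma weight_profile_of S :
  weight (profile_of S) = exp (- (\sum_C ((absz (colsum S C))%:R : R)) / sqrtl).
Proof.
rewrite /weight; under eq_bigr do rewrite profile_of_abs.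
by rewrite prodrXr expRX -[_ *+ \sum_i _]mulr_natr natr_sum; congr exp; rewrite !RealsE; ring.
Qed.

Lemma sqrtl_gt0 : 0 < sqrtl.
Proof. by rewrite sqrtr_gt0 ltr0n. Qed.

Lemma sqrtl_ge1 : 1 <= sqrtl.
Proof. by rewrite -[X in X <= _]sqrtr1 ler_wsqrtr // ler1n. Qed.

Lemma sum_abs_colsum_le C :
  \sum_(S : Assign f l) ((absz (colsum S C))%:R : R) <= #|{: Assign f l}|%:R * sqrtl.
Proof.
apply: sum_le_of_sum_sqr_le sqrtl_gt0 _; rewrite sqr_sqrtr ?ler0n //.
have absz_sqr (x : int) : ((absz x)%:R : R) ^+ 2 = (x ^+ 2)%:~R.
  by rewrite pmulrn -rmorphXn /= abszE real_normK ?num_real.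
under eq_bigr do rewrite absz_sqr.
rewrite -rmorph_sum /= sum_sqr_colsum natz -pmulrn natrM.
by rewrite ler_pM2l ?ler_nat ?card_inCol_le // ltr0n; apply/card_gt0P; exists [ffun=> true].
Qed.

Lemma sum_weight_profile_of_ge :
  #|{: Assign f l}|%:R * exp (- #|{: Col f l}|%:R) <= \sum_S weight (profile_of S).
Proof.
have N0 : (0 < #|{: Assign f l}|)%nat by apply/card_gt0P; exists [ffun=> true].
under eq_bigr do rewrite weight_profile_of.
apply: le_trans (jensen_exp _ N0); rewrite ler_pM2l ?ltr0n //; apply: ler_exp.
under eq_bigr do rewrite !RealsE.
rewrite -mulr_suml sumrN !RealsE !mulNr lerNl opprK -mulrA -invfM.
rewrite ler_pdivrMr ?mulr_gt0 ?sqrtl_gt0 ?ltr0n // exchange_big /=.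
apply: le_trans (ler_sum _ (fun C _ => sum_abs_colsum_le C)) _.
by rewrite sumr_const -[X in X <= _]mulr_natl [_ * (_%:R)]mulrC.
Qed.

Lemma sum_weight_le :
  \sum_(d : profile) weight d <= (2 * (sqrtl + 1)) ^+ #|{: Col f l}|.
Proof.
rewrite /weight -(bigA_distr_bigA (fun C (p : bool * 'I_l.+1) => exp (- sqrtl^-1) ^+ p.2)) /=.
rewrite prodr_const; apply: lerXn2r; rewrite ?nnegrE.
- by apply: sumr_ge0 => p _; exact/exprn_ge0/ltW/exp_gt0.
- by rewrite mulr_ge0 ?addr_ge0 ?sqrtr_ge0.
rewrite -(pair_bigA _ (fun _ (t : 'I_l.+1) => exp (- sqrtl^-1) ^+ t)) /= big_bool /=.
by have := sum_exp_geom_le l.+1 sqrtl_gt0; lra.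
Qed.

Lemma max_fiber_ge (d : profile) :
  (forall d', #|[set S | profile_of S == d']| <= #|[set S | profile_of S == d]|)%nat ->
  #|{: Assign f l}|%:R * (exp (- 1) / (2 * (sqrtl + 1))) ^+ #|{: Col f l}|
    <= #|[set S | profile_of S == d]|%:R.
Proof.
move=> d_max; set X := 2 * (sqrtl + 1).
have X0 : 0 < X ^+ #|{: Col f l}| by rewrite exprn_gt0 // mulr_gt0 ?ltr_wpDl ?sqrtr_ge0.
rewrite expr_div_n mulrA ler_pdivrMr // expRX mulNrn.
apply: le_trans sum_weight_profile_of_ge _.
apply: le_trans (sum_weight_le_max_fiber _ d_max) _ => [d'|].
  by apply: prodr_ge0 => C _; exact/exprn_ge0/ltW/exp_gt0.
by rewrite ler_wpM2l ?ler0n ?sum_weight_le.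
Qed.

End Profiles.

Section Minima.
Local Open Scope ring_scope.
Variables f l : nat.
Variable d : {ffun Col f l -> bool * 'I_l.+1}.

Lemma fiber_globalMin S : profile_of S = d -> globalMin (profile_val d) S.
Proof.
move=> <-; apply/forallP => T; rewrite (proj2 (Ham_eq0E _ _)) ?Ham_ge0 // => C.
by rewrite profile_val_of.
Qed.

(* An inhabited fiber forces min H = 0, so all global minima share the column
   sums [profile_val d]. *)
Lemma globalMin_kMin S0 S :
  profile_of S0 = d -> globalMin (profile_val d) S -> kMin (expn 2 f - 1) (profile_val d) S.
Proof.
move=> S0d Smin.
have Ham0 T : globalMin (profile_val d) T -> Ham (profile_val d) T = 0.
  move=> /forallP/(_ S0); rewrite (proj2 (Ham_eq0E _ S0)) => [Tle|C]; last first.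
    by rewrite -S0d profile_val_of.
  by apply/le_anti; rewrite Tle Ham_ge0.
apply/forallP => T; apply/implyP => /andP [dist_ge1 dist_le].
rewrite Ham0 // lt_def Ham_ge0 andbT; apply: contraTneq dist_le => HamT0.
have Tmin : globalMin (profile_val d) T.
  by apply/forallP => T'; rewrite HamT0 Ham_ge0.
have neqST : S != T.
  apply: contraTneq dist_ge1 => ->; rewrite lt0n negbK cards_eq0.
  by apply/eqP/setP => i; rewrite !inE eqxx.
have eqST C : colsum S C = colsum T C.
  by rewrite !(proj1 (Ham_eq0E _ _) (Ham0 _ _)).
have := colsum_eq_hdist_ge eqST neqST; have := expn_gt0 2 f; lia.
Qed.
End Minima.

Lemma natpowE m n : Nat.pow m n = expn m n.
Proof. by elim: n => [|n IHn] //=; rewrite expnS IHn. Qed.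

Section Constant.
Local Open Scope ring_scope.

Lemma expN1_ratio_le (x s : R) : 1 <= x -> 1 <= s ->
  exp (-1) / 4 / (x * s) <= exp (-1) / (2 * (s + 1)).
Proof.
move=> x1 s1; rewrite -!mulrA ler_pM2l ?exp_gt0 // -invfM.
rewrite lef_pV2 ?posrE ?mulr_gt0 //; try lra.
nra.
Qed.

End Constant.

Theorem mainTheorem5 :
  exists c : R, (0 < c)%R /\
  forall f l : nat, (0 < f)%N -> (0 < l)%N ->
  exists M : Col f l -> int,
    (pow 2 (l ^ f) * pow (c / (INR f * sqrt (INR l))) (f * l ^ (f - 1))
       <= INR #|[set S : Assign f l | globalMin M S]|)%R /\
    (forall S : Assign f l, globalMin M S -> kMin (2 ^ f - 1) M S).
Proof.
exists (exp (-1) / 4)%R; split; first by apply/RltP; rewrite !RealsE divr_gt0 ?exp_gt0 ?ltr0n.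
move=> f l f_gt0 l_gt0.
have [d d_max /set0Pn [S0]] := exists_max_fiber (@profile_of f l) [ffun=> true].
rewrite inE => /eqP S0d.
exists (profile_val d); split=> [|S Smin]; last first.
  by rewrite natpowE; apply: globalMin_kMin S0d Smin.
apply/RleP; rewrite !natpowE !RealsE -natrX -card_Assign -card_Col.
apply: le_trans (le_trans _ (max_fiber_ge l_gt0 d_max)) _.
  rewrite ler_wpM2l ?ler0n // lerXn2r ?nnegrE ?divr_ge0 ?mulr_ge0 ?addr_ge0 ?sqrtr_ge0 ?(ltW (exp_gt0 _)) //.
  by apply: expN1_ratio_le; rewrite ?ler1n ?sqrtl_ge1.
rewrite ler_nat; apply/subset_leq_card/subsetP => S; rewrite !inE => /eqP.
exact: fiber_globalMin.
Qed.
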